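(* For every digraph $D$, the inverse limit $\varprojlim(D/P)_{P\in\mathcal{P}(D)}$ is a compact Hausdorff space, the map $\Phi\colon D\to\varprojlim(D/P)_{P\in\mathcal{P}(D)}$, $x\mapsto(\varphi_P(x))_{P\in\mathcal{P}(D)}$, is an embedding (a homeomorphism onto its image), and $\Phi(D)$ is dense in $\varprojlim(D/P)_{P\in\mathcal{P}(D)}$. In particular the inverse limit is a Hausdorff compactification of $D$.
   Context: Digraphs have no loops and no parallel edges. $D$ is regarded as a topological space with the 1-complex topology: each edge is a copy of $[0,1]$ glued at its endvertices; basic open sets are open stars of radius $\varepsilon$ around vertices and open subintervals of edges. A vertex set $Y$ separates vertex sets $A,B$ if every $A$–$B$ path meets $Y$ or every $B$–$A$ path meets $Y$. A finite partition $P$ of $V(D)$ is admissible if any two distinct classes of $P$ are separated by some finite vertex set; $\mathcal{P}(D)$ is the set of admissible partitions, directed by $P\le P'$ iff every class of $P'$ is contained in a class of $P$. For $P\in\mathcal{P}(D)$, $D/P$ is the finite multi-digraph with vertex set $P$ where, for distinct $p_1,p_2\in P$: if $D$ has finitely many edges from $p_1$ to $p_2$, there is one edge $(e,p_1,p_2)$ for each such edge $e$ of $D$; if infinitely many, there is a single quotient edge $(p_1p_2,p_1,p_2)$. $D/P$ carries the 1-complex topology. For $P\le P'$ the bonding map $f_{P'P}\colon D/P'\to D/P$ sends a vertex $p'$ to the class $p\supseteq p'$; an edge $(e',p_1',p_2')$ with $p_1',p_2'$ in the same class $p$ is mapped entirely to $p$; otherwise, with $p_1'\subseteq p_1$, $p_2'\subseteq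 p_2$, $p_1\ne p_2$, it is mapped pointwise (corresponding points) onto the quotient edge from $p_1$ to $p_2$ if $D/P$ has one, and otherwise onto the edge $(e',p_1,p_2)$ of $D/P$. The inverse limit $\varprojlim(D/P)_{P\in\mathcal{P}(D)}$ is the subspace of $\prod_P D/P$ of all $(x_P)_P$ with $f_{P'P}(x_{P'})=x_P$ for all $P\le P'$. $\varphi_P\colon D\to D/P$: a vertex $v$ goes to the class containing $v$; an inner point $z$ of an edge $vw$ goes to the class containing $v,w$ if they lie in the same class, and otherwise to the corresponding point on the edge of $D/P$ from the class of $v$ to the class of $w$ (the copy of $vw$, or the quotient edge). *)

From HB Require Import structures.
From mathcomp Require Import all_boot all_order all_algebra all_classical all_reals all_analysis.
From mathcomp Require Import Rstruct Rstruct_topology.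

Set Implicit Arguments.
Unset Strict Implicit.
Unset Printing Implicit Defensive.
Import Order.TTheory GRing.Theory Num.Theory.
Local Open Scope classical_set_scope.
Local Open Scope ring_scope.

(** * Digraphs: no loops; no parallel edges (edges = ordered pairs). *)
Record digraph := Digraph {
  dvert : Type;
  dedge : dvert -> dvert -> Prop;
  dedge_irr : forall v, ~ dedge v v }.

Record cplx := Cplx {
  cV : Type;
  cE : Type;
  csrc : cE -> cV;
  ctgt : cE -> cV }.

(** Points of the 1-complex: vertices, and inner points [t] (0 < t < 1) of
    edges; the edge [e] is the copy of [0,1] with 0 glued to [csrc e] and
    1 glued to [ctgt e]. *)
Inductive cpoint (C : cplx) : Type :=
  | CV of cV C
  | CE (e : cE C) (t : Rdefinitions.R) of (0 < t < 1).

HB.instance Definition _ (C : cplx) := gen_eqMixin (cpoint C).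
HB.instance Definition _ (C : cplx) := gen_choiceMixin (cpoint C).

Definition open_star (C : cplx) (x : cV C) (eps : Rdefinitions.R) : set (cpoint C) :=
  fun z => match z with
           | CV y => y = x
           | CE e t _ => (csrc e = x /\ t < eps) \/ (ctgt e = x /\ 1 - eps < t)
           end.

Definition edge_interval (C : cplx) (e : cE C) (a b : Rdefinitions.R) : set (cpoint C) :=
  fun z => match z with
           | CV _ => False
           | CE e' t _ => e' = e /\ a < t < b
           end.

Definition cbasic (C : cplx) : set (set (cpoint C)) :=
  fun U => (exists x eps, 0 < eps < 1 /\ U = open_star x eps)
        \/ (exists e a b, 0 <= a /\ a < b /\ b <= 1 /\ U = edge_interval e a b).

HB.instance Definition _ (C : cplx) :=
  isSubBaseTopological.Build (cpoint C) (@cbasic C) id.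

Definition dedges (D : digraph) := {uv : dvert D * dvert D | dedge uv.1 uv.2}.
Definition dcplx (D : digraph) : cplx :=
  @Cplx (dvert D) (dedges D) (fun e => (sval e).1) (fun e => (sval e).2).
Definition dspace (D : digraph) := cpoint (dcplx D).

Fixpoint is_walk (D : digraph) (x : dvert D) (s : list (dvert D)) : Prop :=
  match s with
  | nil => True
  | cons y s' => dedge x y /\ is_walk y s'
  end.

Fixpoint walk_meets (D : digraph) (Y : set (dvert D)) (s : list (dvert D)) : Prop :=
  match s with
  | nil => False
  | cons y s' => Y y \/ walk_meets Y s'
  end.

Definition all_paths_meet (D : digraph) (Y A B : set (dvert D)) : Prop :=
  forall (a : dvert D) (s : list (dvert D)),
    A a -> is_walk a s -> B (last a s) -> walk_meets Y (cons a s).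

Definition separates (D : digraph) (Y A B : set (dvert D)) : Prop :=
  all_paths_meet Y A B \/ all_paths_meet Y B A.

Definition finite_partition (D : digraph) (P : set (set (dvert D))) : Prop :=
  [/\ finite_set P,
      (forall p, P p -> p !=set0),
      (forall p q, P p -> P q -> p `&` q !=set0 -> p = q)
    & (forall v, exists2 p, P p & p v)].

Definition admissible (D : digraph) (P : set (set (dvert D))) : Prop :=
  finite_partition P /\
  forall p q, P p -> P q -> p <> q ->
    exists Y : set (dvert D), finite_set Y /\ separates Y p q.

Definition adm_part (D : digraph) := {P : set (set (dvert D)) | admissible P}.

Definition part_le (D : digraph) (P P' : adm_part D) : Prop :=
  forall p', sval P' p' -> exists2 p, sval P p & p' `<=` p.

Section Quotient.
Variables (D : digraph) (P : adm_part D).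

Definition qvert := {p : set (dvert D) | sval P p}.

(** the class of P containing v *)
Definition cls (v : dvert D) : qvert :=
  let h := match proj2_sig P with conj hp _ =>
             match hp with And4 _ _ _ hc => hc v end end in
  let w := cid2 h in exist _ (sval w) (s2valP w).

Definition edges_between (p1 p2 : set (dvert D)) : set (dvert D * dvert D) :=
  [set uv | dedge uv.1 uv.2 /\ p1 uv.1 /\ p2 uv.2].

(** raw edge labels of D/P: copies of D-edges, and quotient edges *)
Inductive qlabel :=
  | QCopy (u v : dvert D)
  | QQuot (p1 p2 : set (dvert D)).

Definition qvalid (l : qlabel) : Prop :=
  match l with
  | QCopy u v => [/\ dedge u v, sval (cls u) <> sval (cls v)
                   & finite_set (edges_between (sval (cls u)) (sval (cls v)))]
  | QQuot p1 p2 => [/\ sval P p1, sval P p2, p1 <> p2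
                   & ~ finite_set (edges_between p1 p2)]
  end.

Definition qedge := {l : qlabel | qvalid l}.

Definition qsrc (l : qedge) : qvert :=
  match l with
  | exist l0 h =>
    (match l0 return qvalid l0 -> qvert with
     | QCopy u v => fun _ => cls u
     | QQuot p1 p2 => fun h => exist _ p1 (match h with And4 h1 _ _ _ => h1 end)
     end) h
  end.

Definition qtgt (l : qedge) : qvert :=
  match l with
  | exist l0 h =>
    (match l0 return qvalid l0 -> qvert with
     | QCopy u v => fun _ => cls v
     | QQuot p1 p2 => fun h => exist _ p2 (match h with And4 _ h2 _ _ => h2 end)
     end) h
  end.

Definition qcplx : cplx := @Cplx qvert qedge qsrc qtgt.

End Quotient.

Definition qspace (D : digraph) (P : adm_part D) := cpoint (qcplx P).

Section Bonding.
Variables (D : digraph) (P P' : adm_part D) (hle : part_le P P').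

(** the class of P containing the class p' of P' *)
Definition up (p' : qvert P') : qvert P :=
  let w := cid2 (hle (proj2_sig p')) in exist _ (sval w) (s2valP w).

Definition bond (z : qspace P') : qspace P :=
  match z with
  | CV p' => @CV (qcplx P) (up p')
  | CE l' t ht =>
    let q1 := up (qsrc l') in
    let q2 := up (qtgt l') in
    match pselect (q1 = q2) with
    | left _ => @CV (qcplx P) q1
    | right _ =>
      match pselect (qvalid P (QQuot (sval q1) (sval q2))) with
      | left hq => @CE (qcplx P) (exist _ _ hq) t ht
      | right _ =>
        match sval l' with
        | QCopy u v =>
          match pselect (qvalid P (QCopy u v)) with
          | left hc => @CE (qcplx P) (exist _ _ hc) t ht
          | right _ => @CV (qcplx P) q1 (* unreachable *)
          end
        | QQuot _ _ => @CV (qcplx P) q1 (* unreachable *)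
        end
      end
    end
  end.

End Bonding.

Definition phi (D : digraph) (P : adm_part D) (z : dspace D) : qspace P :=
  match z with
  | CV v => @CV (qcplx P) (cls P v)
  | CE e t ht =>
    let u := (sval e).1 in
    let v := (sval e).2 in
    match pselect (cls P u = cls P v) with
    | left _ => @CV (qcplx P) (cls P u)
    | right _ =>
      match pselect (qvalid P (QCopy u v)) with
      | left hc => @CE (qcplx P) (exist _ _ hc) t ht
      | right _ =>
        match pselect (qvalid P (QQuot (sval (cls P u)) (sval (cls P v)))) with
        | left hq => @CE (qcplx P) (exist _ _ hq) t ht
        | right _ => @CV (qcplx P) (cls P u) (* unreachable *)
        end
      end
    end
  end.

Definition qprod (D : digraph) := prod_topology (@qspace D).

Definition invlim (D : digraph) : set (qprod D) :=
  [set x | forall (P P' : adm_part D) (h : part_le P P'), bond h (x P') = x P].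

Definition Phi (D : digraph) (z : dspace D) : qprod D := fun P => phi P z.

Arguments invlim : clear implicits.
Arguments Phi : clear implicits.

From Pilot Require Import Defs.
From HB Require Import structures.
From mathcomp Require Import all_boot all_order all_algebra all_classical all_reals all_analysis.
From mathcomp Require Import Rstruct Rstruct_topology.
From mathcomp Require Import finmap.
From mathcomp Require Import lra.

(* Each quotient D/P is a finite 1-complex, hence compact Hausdorff, and the
   maps phi_P and the bonding maps send every edge either to a vertex or
   linearly onto an edge, hence are continuous; so the inverse limit is a
   closed subspace of a compact Hausdorff product.  A basic open set of D (a
   star around x, or a subinterval of an edge uv) is the preimage of an open
   set of D/P for the admissible partition P splitting off {x} (resp. {u, v})
   into singletons, which makes Phi an embedding.  Admissible partitions have
   common refinements, so the preimages of open sets of single factors form a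
   neighbourhood base of the inverse limit; as every phi_P is onto, Phi(D) is
   dense. *)

Set Implicit Arguments.
Unset Strict Implicit.
Unset Printing Implicit Defensive.
Import Order.TTheory GRing.Theory Num.Theory.
Local Open Scope classical_set_scope.
Local Open Scope ring_scope.
(* [all_analysis] also exports a [cpoint] (the centre of a ball). *)
Local Notation cpoint := Defs.cpoint.

Lemma sval_inj (T : Type) (P : T -> Prop) : injective (@sval T P).
Proof. by case=> [x px] [y py] /= xy; exact: eq_exist. Qed.

Lemma finite_setT_sig (T : Type) (P : T -> Prop) (A : set T) :
  finite_set A -> P `<=` A -> finite_set [set: {x | P x}].
Proof.
move=> fA PA; have -> : [set: {x | P x}] = sval @^-1` A.
  by apply/seteqP; split => // -[x px] _; exact: PA.
by apply: finite_preimage => // x y _ _; exact: sval_inj.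
Qed.

Lemma finite_bigcup_compact (X : topologicalType) (I : Type) (A : set I)
  (F : I -> set X) : finite_set A -> (forall i, A i -> compact (F i)) ->
  compact (\bigcup_(i in A) F i).
Proof.
move=> fA cF; rewrite -(@bigsetU_fset_set X {classic I} A F fA) big_seq_cond.
apply: bigsetU_compact => i /andP[+ _]; rewrite in_fset_set // => /set_mem.
exact: cF.
Qed.

Lemma closed_equalizer (T U : topologicalType) (f g : T -> U) :
  hausdorff_space U -> continuous f -> continuous g -> closed [set x | f x = g x].
Proof.
move=> hU cf cg x clx; apply: hU => A B nA nB.
have : nbhs x (f @^-1` A `&` g @^-1` B) by apply: filterI; [exact: cf|exact: cg].
by case/clx => y [/= fyg [Ay By]]; exists (f y); split => //; rewrite fyg.
Qed.

Lemma cvg_prod_topology (I : Type) (K : I -> topologicalType)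
  (F : set_system (prod_topology K)) (x : prod_topology K) :
  Filter F -> (forall i, proj i @ F --> x i) -> F --> x.
Proof.
move=> FF Fx; apply/cvg_sup => i A /= [B [[C oC <-] Bx sBA]].
rewrite nbhs_filterE; apply: (filterS sBA); apply: (Fx i C).
by apply: open_nbhs_nbhs; split.
Qed.

Section InverseLimit.
Context {I : eqType} (K : I -> topologicalType) (le : I -> I -> Prop)
  (f : forall i j, le i j -> K j -> K i).
Hypothesis f_cont : forall i j (h : le i j), continuous (f h).

Definition inverse_limit : set (prod_topology K) :=
  [set x | forall i j (h : le i j), f h (x j) = x i].

Lemma closed_inverse_limit :
  (forall i, hausdorff_space (K i)) -> closed inverse_limit.
Proof.
move=> hK x clx i j h.
have : closed [set y : prod_topology K | f h (proj j y) = proj i y].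
  apply: closed_equalizer => //; last exact: proj_continuous.
  by move=> y; apply: continuous_comp; [exact: proj_continuous|exact: f_cont].
by apply; apply: (closureS _ clx) => y; apply.
Qed.

Lemma compact_inverse_limit : (forall i, hausdorff_space (K i)) ->
  (forall i, compact [set: K i]) -> compact inverse_limit.
Proof.
move=> hK cK; apply: (@subclosed_compact _ _ setT) => //.
  exact: closed_inverse_limit.
have := tychonoff cK; congr compact.
by apply/seteqP; split.
Qed.

Hypothesis le_directed : forall i j, exists k, le i k /\ le j k.
Variable i0 : I.

Lemma inverse_limit_nbhs x W : inverse_limit x -> nbhs x W ->
  exists i (V : set (K i)),
    nbhs (x i) V /\ inverse_limit `&` proj i @^-1` V `<=` W.
Proof.
move=> limx; pose G := [set W | exists i (V : set (K i)),
  nbhs (x i) V /\ inverse_limit `&` proj i @^-1` V `<=` W].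
suff : nbhs x `<=` G by apply.
apply: cvg_prod_topology => [|i V xV]; last by exists i, V; split => // y [].
constructor.
- by exists i0, setT; split => //; exact: filterT.
- move=> A B [i [V [xV sA]]] [j [V' [xV' sB]]].
  have [k [ik jk]] := le_directed i j.
  exists k, (f ik @^-1` V `&` f jk @^-1` V'); split.
    by apply: filterI; apply: f_cont; rewrite limx.
  move=> y [limy [/= Vy V'y]]; split.
    by apply: sA; split => //; rewrite /= /proj -(limy _ _ ik).
  by apply: sB; split => //; rewrite /= /proj -(limy _ _ jk).
- by move=> A B AB [i [V [xV sA]]]; exists i, V; split => // y /sA /AB.
Qed.

Lemma inverse_limit_dense (S : set (prod_topology K)) :
  S `<=` inverse_limit -> (forall i (y : K i), exists2 s, S s & s i = y) ->
  inverse_limit `<=` closure S.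
Proof.
move=> Slim Sonto x limx W /(inverse_limit_nbhs limx) [i [V [xV sW]]].
have [s Ss sx] := Sonto i (x i).
exists s; split => //; apply: sW; split; first exact: Slim.
by rewrite /= /proj sx; exact: nbhs_singleton.
Qed.

End InverseLimit.

Section Complex.
Variable C : cplx.
Let R := Rdefinitions.R.

Lemma cbasic_nbhs_sub (p : cpoint C) (F : set_system (cpoint C)) :
  Filter F -> (forall B, cbasic B -> B p -> F B) -> nbhs p `<=` F.
Proof.
move=> FF FB U [_ [[I Irp] <-] [G]] /[dup] /(Irp _) [S Ssub <-] IS Sp sU.
move: IS Sp; set K := \bigcap_(i in _) _ => IS Sp.
apply: (@filterS _ F FF K); first by move=> y Ky; apply: sU; exists K.
apply: filter_bigI => B SB; apply: FB; last exact: Sp.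
by have /set_mem := Ssub _ SB.
Qed.

Lemma cbasic_open (B : set (cpoint C)) : cbasic B -> open B.
Proof.
move=> cB; exists [set B]; last by rewrite bigcup_set1.
move=> A ->; exists [fset B]%fset; last by rewrite set_fset1 bigcap_set1.
by move=> x /fset1P ->; apply: mem_set.
Qed.

Lemma open_star_cbasic (x : cV C) (eps : R) :
  0 < eps < 1 -> cbasic (open_star x eps).
Proof. by move=> h; left; exists x, eps. Qed.

Lemma edge_interval_cbasic (e : cE C) (a b : R) :
  0 <= a -> a < b -> b <= 1 -> cbasic (edge_interval e a b).
Proof. by move=> *; right; exists e, a, b. Qed.

Definition cbasic_separated (x y : cpoint C) := exists U V,
  [/\ cbasic U, cbasic V, U x, V y & forall z, U z -> V z -> False].

Lemma cbasic_separated_sym x y : cbasic_separated x y -> cbasic_separated y x.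
Proof.
by move=> [U [V [? ? ? ? UV]]]; exists V, U; split => // z ? ?; exact: (UV z).
Qed.

Lemma cbasic_separated_CV (a b : cV C) : a <> b -> cbasic_separated (CV a) (CV b).
Proof.
move=> ab; exists (open_star a (1/2)), (open_star b (1/2)).
split => //; try by apply: open_star_cbasic; lra.
case=> [z /= -> //|e t ht /=] [][h1 h2] [][h3 h4];
  try (by apply: ab; rewrite -h1 -h3); clear h1 h3 ab; lra.
Qed.

Lemma cbasic_separated_CV_CE (a : cV C) e t (ht : 0 < t < 1) :
  cbasic_separated (CV a) (CE e ht).
Proof.
have [t0 t1] := andP ht.
pose eps := Order.min t (1 - t) / 2.
have hm1 : Order.min t (1 - t) <= t by rewrite ge_min lexx.
have hm2 : Order.min t (1 - t) <= 1 - t by rewrite ge_min lexx orbT.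
have hm0 : 0 < Order.min t (1 - t) by rewrite lt_min t0 /=; lra.
exists (open_star a eps), (edge_interval e eps (1 - eps)); split.
- by apply: open_star_cbasic; rewrite /eps; apply/andP; split; lra.
- by apply: edge_interval_cbasic; rewrite /eps; lra.
- by [].
- by rewrite /= /eps; split => //; apply/andP; split; lra.
by case=> [z //|e' s hs /=] [][_ h] [_ /andP[h1 h2]]; lra.
Qed.

Lemma cbasic_separated_CE e t (ht : 0 < t < 1) e' t' (ht' : 0 < t' < 1) :
  CE e ht <> CE e' ht' -> cbasic_separated (CE e ht) (CE e' ht').
Proof.
move=> ne; have [ee'|ee'] := pselect (e = e'); last first.
  exists (edge_interval e 0 1), (edge_interval e' 0 1).
  split => //; try by apply: edge_interval_cbasic; lra.
  by case=> [z //|f s hs /=] [-> _] [? _].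
subst e'; wlog lt : t t' ht ht' ne / t < t'.
  move=> W; have [|gt|tt'] := ltgtP t t'; first exact: W.
    by apply/cbasic_separated_sym/W => // E; apply: ne; rewrite E.
  by subst t'; case: ne; congr CE; exact: bool_irrelevance.
have [? ?] := andP ht; have [? ?] := andP ht'; pose m := (t + t') / 2.
exists (edge_interval e 0 m), (edge_interval e m 1); split.
- by apply: edge_interval_cbasic; rewrite /m; lra.
- by apply: edge_interval_cbasic; rewrite /m; lra.
- by split => //; apply/andP; split; rewrite /m; lra.
- by split => //; apply/andP; split; rewrite /m; lra.
by case=> [z //|f s hs /=] [_ /andP[? ?]] [_ /andP[? ?]]; lra.
Qed.

Lemma cbasic_separatedP (x y : cpoint C) : x <> y -> cbasic_separated x y.
Proof.
case: x => [a|e t ht]; case: y => [b|e' t' ht'] ne.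
- by apply: cbasic_separated_CV => ab; apply: ne; rewrite ab.
- exact: cbasic_separated_CV_CE.
- exact/cbasic_separated_sym/cbasic_separated_CV_CE.
- exact: cbasic_separated_CE.
Qed.

Lemma cpoint_hausdorff : hausdorff_space (cpoint C).
Proof.
move=> p q; apply: contraPP => /cbasic_separatedP [U [V [cU cV Up Vq UV]]].
have nU : nbhs p U by apply: open_nbhs_nbhs; split => //; exact: cbasic_open.
have nV : nbhs q V by apply: open_nbhs_nbhs; split => //; exact: cbasic_open.
by move=> /(_ U V nU nV) [z [Uz Vz]]; exact: (UV z).
Qed.

Definition edge_path (e : cE C) (s : R) : cpoint C :=
  match pselect (0 < s < 1) with
  | left h => CE e h
  | right _ => if s <= 0 then CV (csrc e) else CV (ctgt e)
  end.

Lemma edge_pathE e s (h : 0 < s < 1) : edge_path e s = CE e h.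
Proof.
by rewrite /edge_path; case: pselect => [h'|//]; congr CE; exact: bool_irrelevance.
Qed.

Lemma edge_path_cases e s :
  (exists h : 0 < s < 1, edge_path e s = CE e h) \/
  (s <= 0 /\ edge_path e s = CV (csrc e)) \/
  (1 <= s /\ edge_path e s = CV (ctgt e)).
Proof.
rewrite /edge_path; case: pselect => [h|/negP]; first by left; exists h.
rewrite negb_and -!leNgt => /orP[s0|s1]; first by right; left; rewrite s0.
by right; right; split => //; case: ifPn => // s0; exfalso; lra.
Qed.

Lemma open_star_edge_path e v eps x : 0 <= x <= 1 -> 0 < eps < 1 ->
  open_star v eps (edge_path e x) <->
  (csrc e = v /\ x < eps) \/ (ctgt e = v /\ 1 - eps < x).
Proof.
move=> /andP[x0 x1] /andP[e0 e1].
case: (edge_path_cases e x) => [[h ->]|[[xl ->]|[xr ->]]] //=.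
- have -> : x = 0 by apply/eqP; rewrite eq_le xl x0.
  split=> [sv|[[]//|[_ ?]]]; first by left; split.
  by exfalso; lra.
- have -> : x = 1 by apply/eqP; rewrite eq_le xr x1.
  split=> [tv|[[_ ?]|[]//]]; first by right; split=> //; lra.
  by exfalso; lra.
Qed.

Lemma edge_interval_edge_path e e' a b x : 0 <= x <= 1 -> 0 <= a -> b <= 1 ->
  edge_interval e' a b (edge_path e x) <-> e = e' /\ a < x < b.
Proof.
move=> /andP[x0 x1] a0 b1.
case: (edge_path_cases e x) => [[h ->]|[[xl ->]|[xr ->]]] //=.
- by split=> // -[_ /andP[ax _]]; exfalso; lra.
- by split=> // -[_ /andP[_ xb]]; exfalso; lra.
Qed.

Lemma edge_path_continuous e : {within `[0, 1], continuous (edge_path e)}.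
Proof.
apply/subspace_continuousP => x; rewrite /= in_itv /= => x01.
apply: cbasic_nbhs_sub => B; rewrite /= /from_subspace /= !nbhs_simpl /fmap /within /=.
case=> [[v [eps [e01 ->]]]|[e' [a [b [a0 [ab [b1 ->]]]]]]].
- rewrite open_star_edge_path // => -[] [ev xe].
  + near=> y; rewrite /= in_itv /= => y01.
    rewrite open_star_edge_path //; left; split => //.
    by near: y; exact: lt_nbhsl.
  + near=> y; rewrite /= in_itv /= => y01.
    rewrite open_star_edge_path //; right; split => //.
    by near: y; exact: lt_nbhsr.
- rewrite edge_interval_edge_path // => -[ee' /andP[ax xb]].
  near=> y; rewrite /= in_itv /= => y01.
  rewrite edge_interval_edge_path //; split => //; apply/andP; split.
    by near: y; exact: lt_nbhsr.
  by near: y; exact: lt_nbhsl.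
Unshelve. all: by end_near.
Qed.

Lemma cpoint_compact : finite_set [set: cV C] -> finite_set [set: cE C] ->
  compact [set: cpoint C].
Proof.
move=> fV fE.
have -> : [set: cpoint C] =
    (@CV C @` setT) `|` \bigcup_(e in setT) (edge_path e @` `[0, 1]).
  apply/seteqP; split => // -[v|e t h] _; first by left; exists v.
  right; exists e => //; exists t; last exact: edge_pathE.
  by rewrite /= in_itv /=; case/andP: h => h1 h2; rewrite !ltW.
apply: compactU; first exact/finite_compact/finite_image.
apply: finite_bigcup_compact => // e _.
by apply: continuous_compact; [exact: edge_path_continuous|exact: segment_compact].
Qed.

End Complex.

Definition cellular (C C' : cplx) (f : cpoint C -> cpoint C') (fV : cV C -> cV C') :=
  (forall v, f (CV v) = CV (fV v)) /\
  (forall e, (fV (csrc e) = fV (ctgt e) /\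
              forall t h, f (CE e (t:=t) h) = CV (fV (csrc e))) \/
     (exists l, [/\ csrc l = fV (csrc e), ctgt l = fV (ctgt e)
               & forall t h, f (CE e (t:=t) h) = CE l h])).

Lemma cellular_continuous (C C' : cplx) (f : cpoint C -> cpoint C') fV :
  cellular f fV -> continuous f.
Proof.
move=> [fv fe] x.
apply: (cbasic_nbhs_sub (@fmap_filter _ _ f _ (@nbhs_filter (cpoint C) x))) => B cB Bx.
suff [B' [cB' B'x sB']] : exists B', [/\ cbasic B', B' x & B' `<=` f @^-1` B].
  apply: (@filterS _ _ _ B') => //.
  by apply: open_nbhs_nbhs; split => //; exact: cbasic_open.
case: cB Bx => [[q [eps [/andP[e0 e1] ->]]]|[l [a [b [a0 [ab [b1 ->]]]]]]].
- case: x => [v|e t h].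
  + rewrite fv /= => vq; exists (open_star v eps); split => //.
      by apply: open_star_cbasic; rewrite e0 e1.
    case=> [w /= ->|e s hs /=]; first by rewrite fv.
    case: (fe e) => [[eq fc]|[l [sl tl fc]]]; rewrite fc /=.
      by rewrite -vq; case=> [][ev _]; [rewrite ev|rewrite eq ev].
    by rewrite sl tl -vq; case=> [][-> ?]; [left|right].
  + case: (fe e) => [[eq fc]|[l [sl tl fc]]]; rewrite fc /=.
      move=> <-; exists (edge_interval e 0 1); split => //.
        by apply: edge_interval_cbasic; lra.
      by case=> [//|e' s hs /=] [ee _]; subst e'; rewrite fc.
    case=> [][lq te].
    * exists (edge_interval e 0 eps); split.
      - by apply: edge_interval_cbasic; lra.
      - by split => //; case/andP: h => h0 _; rewrite h0 te.
      by case=> [//|e' s hs /=] [ee /andP[_ se]]; subst e'; rewrite /= fc /= lq; left.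
    * exists (edge_interval e (1 - eps) 1); split.
      - by apply: edge_interval_cbasic; lra.
      - by split => //; case/andP: h => _ h1; rewrite h1 te.
      by case=> [//|e' s hs /=] [ee /andP[se _]]; subst e'; rewrite /= fc /= lq; right.
- case: x => [v|e t h]; first by rewrite fv.
  case: (fe e) => [[eq fc]|[l' [sl tl fc]]]; rewrite fc //= => -[ll /andP[hat htb]].
  subst l'; exists (edge_interval e a b); split.
  - exact: edge_interval_cbasic.
  - by split => //; rewrite hat htb.
  by case=> [//|e' s hs /=] [ee /andP[has hsb]]; subst e'; rewrite /= fc /= has hsb.
Qed.

Section Quotient.
Variable D : digraph.
Local Notation V := (dvert D).
Implicit Types P : adm_part D.

Lemma part_finite P : finite_set (sval P).
Proof. by case: P => P [[]]. Qed.

Lemma part_neq0 P p : sval P p -> p !=set0.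
Proof. by case: P => P [[]] /= _ P0 *; exact: P0. Qed.

Lemma part_disjoint P p q : sval P p -> sval P q -> p `&` q !=set0 -> p = q.
Proof. by case: P => P [[]] /= _ _ Pdis *; exact: Pdis. Qed.

Lemma part_cover P v : exists2 p, sval P p & p v.
Proof. by case: P => P [[]]. Qed.

Lemma part_separates P p q : sval P p -> sval P q -> p <> q ->
  exists Y : set V, finite_set Y /\ separates Y p q.
Proof. by case: P => P [_ Psep] /=; exact: Psep. Qed.

Lemma cls_mem P v : sval (cls P v) v.
Proof. by rewrite /cls; case: cid2. Qed.

Lemma cls_uniq P (q : qvert P) v : sval q v -> q = cls P v.
Proof.
move=> qv; apply: sval_inj; apply: part_disjoint; try exact: proj2_sig.
by exists v; split => //; exact: cls_mem.
Qed.

Lemma qcopy_valid P u w : dedge u w -> cls P u <> cls P w ->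
  qvalid P (QCopy u w) <->
  finite_set (edges_between (sval (cls P u)) (sval (cls P w))).
Proof.
by move=> uw ne; split=> [[]//|fin]; split => // /sval_inj.
Qed.

Lemma qquot_valid P u w : cls P u <> cls P w ->
  qvalid P (QQuot (sval (cls P u)) (sval (cls P w))) <->
  ~ finite_set (edges_between (sval (cls P u)) (sval (cls P w))).
Proof.
by move=> ne; split=> [[]//|inf]; split => //; try exact: proj2_sig; move=> /sval_inj.
Qed.

Lemma edges_betweenS (p1 p2 q1 q2 : set V) : p1 `<=` q1 -> p2 `<=` q2 ->
  edges_between p1 p2 `<=` edges_between q1 q2.
Proof. by move=> s1 s2 [u v] /= [? [? ?]]; split => //; split; [exact: s1|exact: s2]. Qed.

Lemma phi_edge_cases P (e : dedges D) :
  let u := (sval e).1 in let w := (sval e).2 in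
  (cls P u = cls P w /\
    forall t (h : 0 < t < 1), phi P (@CE (dcplx D) e t h) = @CV (qcplx P) (cls P u)) \/
  (cls P u <> cls P w /\ exists l : qedge P,
    [/\ qsrc l = cls P u, qtgt l = cls P w,
     qvalid P (QCopy u w) -> sval l = QCopy u w,
     ~ qvalid P (QCopy u w) -> sval l = QQuot (sval (cls P u)) (sval (cls P w))
    & forall t (h : 0 < t < 1), phi P (@CE (dcplx D) e t h) = @CE (qcplx P) l t h]).
Proof.
move=> u w; have uw : dedge u w := proj2_sig e.
have [eq|ne] := pselect (cls P u = cls P w).
  by left; split => // t h; rewrite /phi; case: pselect.
right; split => //.
have [hc|nc] := pselect (qvalid P (QCopy u w)).
  exists (exist _ _ hc); split => // t h.
  rewrite /phi; case: pselect => [/ne[]|_]; case: pselect => [hc'|/(_ hc)[]].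
  by rewrite (Prop_irrelevance hc' hc).
have hq : qvalid P (QQuot (sval (cls P u)) (sval (cls P w))).
  by apply/qquot_valid => // fin; apply: nc; exact/qcopy_valid.
exists (exist _ _ hq); split => //; try exact: sval_inj.
move=> t h; rewrite /phi; case: pselect => [/ne[]|_]; case: pselect => [/nc[]|_].
case: pselect => [hq'|/(_ hq)[]].
by rewrite (Prop_irrelevance hq' hq).
Qed.

Lemma phi_cellular P : cellular (phi P) (cls P).
Proof.
split => // e; case: (phi_edge_cases P e) => [|[_ [l [sl tl _ _ fl]]]]; first by left.
by right; exists l.
Qed.

Lemma phi_continuous P : continuous (phi P).
Proof. exact: cellular_continuous (phi_cellular P). Qed.

Section Bonding.
Variables (P P' : adm_part D) (hle : part_le P P').

Lemma up_sub (p' : qvert P') : sval p' `<=` sval (up hle p').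
Proof. by rewrite /up; case: cid2. Qed.

Lemma up_cls v : up hle (cls P' v) = cls P v.
Proof. by apply: cls_uniq; apply: up_sub; exact: cls_mem. Qed.

Lemma bond_edge_cases (l' : qedge P') :
  let q1 := up hle (qsrc l') in let q2 := up hle (qtgt l') in
  (q1 = q2 /\ forall t (h : 0 < t < 1),
     bond hle (@CE (qcplx P') l' t h) = @CV (qcplx P) q1) \/
  (q1 <> q2 /\ exists l : qedge P, [/\ qsrc l = q1, qtgt l = q2,
     qvalid P (QQuot (sval q1) (sval q2)) -> sval l = QQuot (sval q1) (sval q2),
     ~ qvalid P (QQuot (sval q1) (sval q2)) -> sval l = sval l'
     & forall t (h : 0 < t < 1), bond hle (@CE (qcplx P') l' t h) = @CE (qcplx P) l t h]).
Proof.
move=> q1 q2; have [eq|ne] := pselect (q1 = q2).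
  by left; split => // t h; rewrite /bond; case: pselect.
right; split => //.
have [hq|nq] := pselect (qvalid P (QQuot (sval q1) (sval q2))).
  exists (exist _ _ hq); split; [exact: sval_inj|exact: sval_inj|by []|by move/(_ hq)|].
  move=> t h; rewrite /bond; case: pselect => [/ne[]|_]; case: pselect => [hq'|/(_ hq)[]].
  by rewrite (Prop_irrelevance hq' hq).
rewrite {}/q1 {}/q2 in ne nq *.
case: l' ne nq => [[u v|p1 p2] hl] ne nq; last first.
  exfalso; apply: nq; have [hp1 hp2 _ inf] := hl.
  split; try exact: proj2_sig; first by move=> /sval_inj.
  by move=> fin; apply: inf; apply: sub_finite_set fin; apply: edges_betweenS => x hx; apply: up_sub.
have [uv _ _] := hl.
have Eu : up hle (qsrc (exist _ _ hl)) = cls P u by rewrite /= up_cls.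
have Ev : up hle (qtgt (exist _ _ hl)) = cls P v by rewrite /= up_cls.
rewrite Eu Ev in ne nq *.
have hc : qvalid P (QCopy u v).
  by apply/qcopy_valid => //; apply: contrapT => inf; exact/nq/(qquot_valid ne).
exists (exist _ _ hc); split => // t h; rewrite /bond Eu Ev.
case: pselect => [/ne[]|_]; case: pselect => [/nq[]|_] /=.
by case: pselect => [hc'|/(_ hc)[]]; rewrite (Prop_irrelevance hc' hc).
Qed.

Lemma bond_cellular : cellular (bond hle) (up hle).
Proof.
split => // l'; case: (bond_edge_cases l') => [|[_ [l [sl tl _ _ fl]]]]; first by left.
by right; exists l.
Qed.

Lemma bond_continuous : continuous (bond hle).
Proof. exact: cellular_continuous bond_cellular. Qed.

Lemma bond_phi (z : dspace D) : bond hle (phi P' z) = phi P z.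
Proof.
case: z => [v|e t h]; first by rewrite /= up_cls.
have uw : dedge (sval e).1 (sval e).2 := proj2_sig e.
case: (phi_edge_cases P' e) => [[eq' ->]|[ne' [l' [sl' tl' c' q' ->]]]].
  case: (phi_edge_cases P e) => [[_ ->]|[ne _]]; first by rewrite /= up_cls.
  by case: ne; rewrite -!up_cls eq'.
have := bond_edge_cases l'; rewrite sl' tl' !up_cls.
case=> [[eqb ->]|[neb [l [sl tl cq cn ->]]]].
  by case: (phi_edge_cases P e) => [[_ ->]|[ne _]].
case: (phi_edge_cases P e) => [[eq _]|[ne [l'' [_ _ c q ->]]]]; first by case: neb.
suff -> : l = l'' by []; apply: sval_inj.
have [hq|nq] := pselect (qvalid P (QQuot (sval (cls P (sval e).1)) (sval (cls P (sval e).2)))).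
  rewrite (cq hq) q // => /(qcopy_valid uw ne) fin.
  exact: (proj1 (qquot_valid ne) hq).
have fin : finite_set (edges_between (sval (cls P (sval e).1)) (sval (cls P (sval e).2))).
  by apply: contrapT => inf; apply/nq/qquot_valid.
rewrite (cn nq) (c (proj2 (qcopy_valid uw ne) fin)); apply: c'.
apply/(qcopy_valid uw ne'); apply: sub_finite_set fin.
by apply: edges_betweenS => x; rewrite -up_cls; exact: up_sub.
Qed.

End Bonding.

Lemma phi_surjective P (x : qspace P) : exists z, phi P z = x.
Proof.
case: x => [q|l t h].
  have [v qv] := part_neq0 (proj2_sig q).
  by exists (@CV (dcplx D) v); rewrite /= -(cls_uniq qv).
case: l => [[u w|p1 p2] hl].
- have [uw nuw fin] := hl; pose e : dedges D := exist _ (u, w) uw.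
  exists (@CE (dcplx D) e t h).
  case: (phi_edge_cases P e) => [[eq _]|[ne [l [_ _ c _ ->]]]].
    by case: nuw; rewrite eq.
  by suff -> : l = exist _ _ hl by []; apply: sval_inj; exact: c.
- have [hp1 hp2 n12 inf] := hl.
  have [[u w] /= [uw [p1u p2w]]] := infinite_setN0 inf.
  pose e : dedges D := exist _ (u, w) uw.
  have E1 : p1 = sval (cls P u) by rewrite -(cls_uniq (q := exist _ p1 hp1) p1u).
  have E2 : p2 = sval (cls P w) by rewrite -(cls_uniq (q := exist _ p2 hp2) p2w).
  exists (@CE (dcplx D) e t h).
  case: (phi_edge_cases P e) => [[eq _]|[ne [l [_ _ _ q ->]]]].
    by case: n12; rewrite E1 E2 eq.
  suff -> : l = exist _ _ hl by [].
  apply: sval_inj; rewrite q /= ?E1 ?E2 // => -[_ _ fin].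
  by apply: inf; rewrite E1 E2.
Qed.

Lemma separatesS (Y A B A' B' : set V) : A' `<=` A -> B' `<=` B ->
  separates Y A B -> separates Y A' B'.
Proof.
move=> sA sB [YAB|YBA]; [left|right] => a s ha w hb;
  [apply: YAB|apply: YBA] => //; by [apply: sA|apply: sB].
Qed.

Definition singleton_part_set (S : set V) : set (set V) :=
  [set p | (exists2 x, S x & p = [set x]) \/ (p = ~` S /\ ~` S !=set0)].

(* Two distinct classes are separated by the singleton one among them: every
   path starting or ending at x meets {x}. *)
Lemma singleton_part_admissible S : finite_set S -> admissible (singleton_part_set S).
Proof.
move=> fS; split; first split.
- apply: (@sub_finite_set _ _ ((fun x => [set x]) @` S `|` [set ~` S])).
    by move=> p [[x Sx ->]|[-> _]]; [left; exists x|right].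
  by rewrite finite_setU; split; [exact: finite_image|exact: finite_set1].
- by move=> p [[x _ ->]|[-> ne]]; [exists x|].
- move=> p q [[x Sx ->]|[-> _]] [[y Sy ->]|[-> _]] [z [pz qz]] //.
  + by rewrite -pz -qz.
  + by case: qz; rewrite pz.
  + by case: pz; rewrite qz.
- move=> v; have [Sv|nSv] := pselect (S v).
    by exists [set v] => //; left; exists v.
  by exists (~` S) => //; right; split => //; exists v.
- move=> p q [[x Sx ->]|[-> _]] Pq ne.
    by exists [set x]; split; [exact: finite_set1|left => a s -> _ _; left].
  case: Pq => [[y Sy ->]|[qe _]]; last by case: ne.
  by exists [set y]; split; [exact: finite_set1|right => a s -> _ _; left].
Qed.

Definition singleton_part S (fS : finite_set S) : adm_part D :=
  exist _ _ (singleton_part_admissible fS).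

Lemma singleton_part_cls S (fS : finite_set S) x : S x ->
  forall v, cls (singleton_part fS) v = cls (singleton_part fS) x -> v = x.
Proof.
move=> Sx v E; have := cls_mem (singleton_part fS) v; rewrite E.
case: (cls _ x) (cls_mem (singleton_part fS) x) => p /= [[y _ ->]|[-> _]] //.
by move=> -> ->.
Qed.

Definition meet_part_set (P1 P2 : adm_part D) : set (set V) :=
  [set p | exists p1 p2, [/\ sval P1 p1, sval P2 p2, p = p1 `&` p2 & p !=set0]].

Lemma meet_part_admissible (P1 P2 : adm_part D) : admissible (meet_part_set P1 P2).
Proof.
split; first split.
- apply: (@sub_finite_set _ _ [set a `&` b | a in sval P1 & b in sval P2]).
    by move=> p [a [b [Pa Pb -> _]]]; exists a => //; exists b.
  by apply: finite_image2; exact: part_finite.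
- by move=> p [a [b [_ _ _ ?]]].
- move=> p q [a [b [Pa Pb -> _]]] [c [d [Pc Pd -> _]]] [z [[az bz] [cz dz]]].
  rewrite (part_disjoint Pa Pc); last by exists z.
  by rewrite (part_disjoint Pb Pd); last by exists z.
- move=> v; have [a Pa av] := part_cover P1 v; have [b Pb bv] := part_cover P2 v.
  by exists (a `&` b); [exists a, b; split => //; exists v|].
- move=> p q [a [b [Pa Pb -> _]]] [c [d [Pc Pd -> _]]] ne.
  have [ac|ac] := pselect (a = c).
    have bd : b <> d by move=> bd; apply: ne; rewrite ac bd.
    have [Y [fY sY]] := part_separates Pb Pd bd.
    by exists Y; split => //; apply: separatesS sY; exact: subIsetr.
  have [Y [fY sY]] := part_separates Pa Pc ac.
  by exists Y; split => //; apply: separatesS sY; exact: subIsetl.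
Qed.

Lemma adm_part_directed (P1 P2 : adm_part D) :
  exists P, part_le P1 P /\ part_le P2 P.
Proof.
exists (exist _ _ (meet_part_admissible P1 P2)).
by split=> p' [a [b [Pa Pb -> _]]]; [exists a|exists b].
Qed.

Lemma qvert_finite P : finite_set [set: qvert P].
Proof. exact: finite_setT_sig (part_finite P) _. Qed.

Lemma qedge_finite P : finite_set [set: qedge P].
Proof.
pose I := sval P `*` sval P `&` [set pq | finite_set (edges_between pq.1 pq.2)].
apply: (@finite_setT_sig _ _ ((fun uv => QCopy uv.1 uv.2) @`
    (\bigcup_(pq in I) edges_between pq.1 pq.2) `|`
    (fun pq => QQuot pq.1 pq.2) @` (sval P `*` sval P))).
  rewrite finite_setU; split; apply: finite_image; last first.
    by apply: finite_setX; exact: part_finite.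
  apply: bigcup_finite => [|pq []//].
  by apply: finite_setIl; apply: finite_setX; exact: part_finite.
case=> [u w [uw ne fin]|p1 p2 [Pp1 Pp2 _ _]]; last by right; exists (p1, p2).
left; exists (u, w) => //; exists (sval (cls P u), sval (cls P w)).
  by split => //; split; exact: proj2_sig.
by split => //; split; exact: cls_mem.
Qed.

Lemma phi_preimage_cbasic (z : dspace D) (B : set (dspace D)) : cbasic B -> B z ->
  exists P (W : set (qspace P)),
    [/\ open W, W (phi P z) & forall y, W (phi P y) -> B y].
Proof.
case=> [[x [eps [e01 ->]]]|[e0 [a [b [a0 [ab [b1 ->]]]]]]] Bz.
- have fS := finite_set1 x; have Sx : [set x] x by [].
  have clsx := @singleton_part_cls _ fS x Sx.
  exists (singleton_part fS), (@open_star (qcplx _) (cls (singleton_part fS) x) eps).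
  split; first by apply: cbasic_open; exact: open_star_cbasic.
  + case: z Bz => [v /= -> //|e t h].
    case: (phi_edge_cases (singleton_part fS) e) => [[eq ->]|[ne [l [sl tl _ _ ->]]]] /=.
      by case=> [][ex _]; [rewrite ex|rewrite eq ex].
    by rewrite sl tl; case=> [][-> ?]; [left|right].
  + case=> [v /clsx //|e t h].
    case: (phi_edge_cases (singleton_part fS) e) => [[eq ->]|[ne [l [sl tl _ _ ->]]]] /=.
      move=> /clsx e1; have /clsx e2 : cls (singleton_part fS) (sval e).2 =
        cls (singleton_part fS) x by rewrite -eq e1.
      by case: (@dedge_irr D x); have := proj2_sig e; rewrite e1 e2.
    by rewrite sl tl; case=> [][/clsx ? ?]; [left|right].
- case: z Bz => [//|e t h] [ee /andP[hat htb]]; subst e0.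
  have fS := finite_set2 (sval e).1 (sval e).2.
  have clsx1 := @singleton_part_cls _ fS _ (or_introl erefl).
  have clsx2 := @singleton_part_cls _ fS _ (or_intror erefl).
  case: (phi_edge_cases (singleton_part fS) e) => [[eq _]|[ne [l [sl tl _ _ fl]]]].
    by case: (@dedge_irr D (sval e).2); have := proj2_sig e; rewrite (clsx2 _ eq).
  exists (singleton_part fS), (@edge_interval (qcplx _) l a b); split.
  + by apply: cbasic_open; exact: edge_interval_cbasic.
  + by rewrite fl /=; split => //; rewrite hat htb.
  case=> [//|e' s hs].
  case: (phi_edge_cases (singleton_part fS) e') => [[_ ->]//|[_ [l' [sl' tl' _ _ ->]]]].
  case=> ll /andP[has hsb]; subst l'; split; last by rewrite has hsb.
  apply: sval_inj; rewrite [sval e']surjective_pairing [sval e]surjective_pairing.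
  by congr pair; [apply: clsx1; rewrite -sl' | apply: clsx2; rewrite -tl'].
Qed.

End Quotient.

HB.instance Definition _ (D : digraph) := gen_eqMixin (adm_part D).

Section Embedding.
Variable D : digraph.

Lemma Phi_continuous : continuous (Phi D).
Proof.
move=> z; apply: cvg_prod_topology => [|P A]; first exact: (fmap_filter _ (@nbhs_filter (dspace D) z)).
exact: phi_continuous.
Qed.

Lemma Phi_invlim (z : dspace D) : invlim D (Phi D z).
Proof. by move=> P P' h; exact: bond_phi. Qed.

Lemma Phi_nbhs (z : dspace D) U : nbhs z U ->
  exists W : set (qprod D), [/\ open W, W (Phi D z) & Phi D @^-1` W `<=` U].
Proof.
pose G := [set A | exists W : set (qprod D),
  [/\ open W, W (Phi D z) & Phi D @^-1` W `<=` A]].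
suff : nbhs z `<=` G by apply.
apply: cbasic_nbhs_sub => [|B cB Bz].
  constructor.
  - by exists setT; split => //; exact: openT.
  - move=> A B [W1 [oW1 W1z sA]] [W2 [oW2 W2z sB]]; exists (W1 `&` W2).
    by split; [exact: openI|by []|move=> y [/sA ? /sB ?]].
  - by move=> A B AB [W [oW Wz sA]]; exists W; split => // y /sA /AB.
have [P [W [oW Wz sW]]] := phi_preimage_cbasic cB Bz.
exists (proj P @^-1` W); split; [|exact: Wz|by move=> y /sW].
by apply: open_comp oW => f _; exact: proj_continuous.
Qed.

Lemma Phi_injective : injective (Phi D).
Proof.
move=> z z' E; apply: contrapT => /cbasic_separatedP [U [U' [cU _ Uz U'z' UU']]].
have [P [W [_ Wz sW]]] := phi_preimage_cbasic cU Uz.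
by apply: (UU' z') => //; apply: sW; rewrite -[phi P z']/(Phi D z' P) -E.
Qed.

Lemma Phi_open (U : set (dspace D)) : open U ->
  exists2 W : set (qprod D), open W & Phi D @` U = W `&` range (Phi D).
Proof.
move=> oU; exists (\bigcup_(W in [set W | open W /\ Phi D @^-1` W `<=` U]) W).
  by apply: bigcup_open => W [].
apply/seteqP; split=> [p [z Uz <-]|p [[W [_ sW] Wp] [y _ yp]]].
  have [W [oW Wz sW]] := Phi_nbhs (open_nbhs_nbhs (conj oU Uz)).
  by split; [exists W|exists z].
by exists y => //; apply: sW; rewrite /= yp.
Qed.

Lemma invlim_compact : compact (invlim D).
Proof.
apply: compact_inverse_limit => [P P' h|P|P]; first exact: bond_continuous.
  exact: cpoint_hausdorff.
by apply: cpoint_compact; [exact: qvert_finite|exact: qedge_finite].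
Qed.

Lemma invlim_hausdorff : hausdorff_space (subspace (invlim D)).
Proof. by apply/subspace_hausdorff/hausdorff_product => P; exact: cpoint_hausdorff. Qed.

Lemma Phi_dense : invlim D `<=` closure (range (Phi D)).
Proof.
apply: (inverse_limit_dense (@bond_continuous D) (@adm_part_directed D)
  (singleton_part (finite_set0 (dvert D)))) => [_ [z _ <-]|P y].
  exact: Phi_invlim.
by have [z <-] := phi_surjective y; exists (Phi D z) => //; exists z.
Qed.

End Embedding.

Theorem theorem4p1 (D : digraph) :
  (* the inverse limit is a compact Hausdorff space *)
  compact (invlim D) /\ hausdorff_space (subspace (invlim D)) /\
  (* Phi maps D into the inverse limit ... *)
  (forall z : dspace D, invlim D (Phi D z)) /\
  (* ... and is an embedding (a homeomorphism onto its image) ... *)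
  (continuous (Phi D) /\ injective (Phi D) /\
   (forall U : set (dspace D), open U ->
      exists2 W : set (qprod D), open W & (Phi D) @` U = W `&` range (Phi D))) /\
  (* ... with dense image in the inverse limit *)
  invlim D `<=` closure (range (Phi D)).
Proof.
split; first exact: invlim_compact.
split; first exact: invlim_hausdorff.
split; first exact: Phi_invlim.
split; last exact: Phi_dense.
split; first exact: Phi_continuous.
split; first exact: Phi_injective.
exact: Phi_open.
Qed.
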